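(* Let $k$ be a field of characteristic $p > 0$, let $n \geq 3$, let $d_1 \ge d_2 \ge \dots \ge d_n \ge 2$ be integers, and let $A = k[x_1,\ldots,x_n]/(x_1^{d_1}, \ldots, x_n^{d_n})$. Write $d_i = N_i p + r_i$ with $N_i$ integers and $0<r_i\le p$. If one of the conditions below holds, then $A$ fails to have the strong Lefschetz property: (1) $p = 2$; (2) $p \geq 3$, $d_1 > p$, $d_2 \leq p$ and $\sum_{i=2}^n (d_i - 1) > r_1$; (3) $p \geq 3$, $d_1 > p$, $d_2 \leq p$ and $r_1 + \sum_{i=2}^n(d_i-1) > p$; (4) $p \geq 3$, $d_1 \leq p$ and $\sum_{i=1}^n(d_i-1) \geq p$; (5) $p \geq 3$ and $d_2 > p$.
   Context: $A$ is graded by degree, $A=\bigoplus_{i\ge0} A_i$. A linear map has maximal rank if it is injective or surjective. A graded artinian algebra $A$ has the strong Lefschetz property if there is a linear form $\ell\in A_1$ such that for all $i\ge 0$ and all $m\ge 1$ the map $A_i\to A_{i+m}$, $a\mapsto \ell^m a$, has maximal rank. *)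

From HB Require Import structures.
From mathcomp Require Import all_boot all_order all_algebra.
From mathcomp Require Import mpoly.
Set Implicit Arguments. Unset Strict Implicit. Unset Printing Implicit Defensive.
Import Order.TTheory GRing.Theory.
Local Open Scope ring_scope.

(* The algebra A = k[x_0..x_{n-1}]/(x_0^{d 0}, ..., x_{n-1}^{d (n-1)}) is modelled
   by the polynomials of {mpoly k[n]} whose monomials lie in the box
   {m | forall j, m j < d j}; these polynomials are canonical representatives of
   the residue classes (the ideal is spanned by the monomials outside the box),
   and the quotient map is the truncation [trunc] below. *)

Section Monomial.
Variables (k : fieldType) (n : nat) (d : nat -> nat).

Definition in_box (m : 'X_{1..n}) : bool := [forall j : 'I_n, (m j < d j)%N].

Definition trunc (p : {mpoly k[n]}) : {mpoly k[n]} :=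
  \sum_(m <- msupp p | in_box m) p@_m *: 'X_[m].

Definition inA (i : nat) (a : {mpoly k[n]}) : Prop :=
  forall m, m \in msupp a -> in_box m /\ mdeg m = i.

Definition mulA_pow (l : {mpoly k[n]}) (m : nat) (a : {mpoly k[n]}) :=
  trunc (l ^+ m * a).

Definition max_rank_mul (l : {mpoly k[n]}) (i m : nat) : Prop :=
  (forall a b, inA i a -> inA i b -> mulA_pow l m a = mulA_pow l m b -> a = b)
  \/ (forall c, inA (i + m) c -> exists2 a, inA i a & mulA_pow l m a = c).

Definition SLP : Prop :=
  exists2 l, inA 1 l &
    forall i m : nat, (1 <= m)%N -> max_rank_mul l i m.

End Monomial.

Definition sum_dm1 (d : nat -> nat) (a b : nat) : nat :=
  (\sum_(a <= i < b) (d i - 1))%N.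

From HB Require Import structures.
From mathcomp Require Import all_boot all_order all_algebra.
From mathcomp Require Import mpoly.
From mathcomp Require Import zify.
Set Implicit Arguments. Unset Strict Implicit. Unset Printing Implicit Defensive.
Import GRing.Theory.
Local Open Scope ring_scope.

(* In characteristic p, for every q = p^e the power l^q of a linear form
   involves only monomials whose exponents are all multiples of q, and hence
   so does l^m for every multiple m = q t.  In each coordinate the exponents
   of l^m thus move by blocks of q.  Choose a monomial x^a close to the top
   of the box and t one more than the number of blocks fitting above it:
   then l^m x^a leaves the box in every monomial, so l^m kills x^a and is not
   injective on A_i, i = deg x^a.  If moreover the exponents left free by
   the blocks add up to at least q, there is a monomial x^c of degree i + m
   in the box that is divisible by no monomial of l^m, so x^c is not in the
   image of l^m.  Each hypothesis of the theorem guarantees this counting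
   condition, with q = p, or with q = 2 or q = 4 when p = 2. *)

Lemma bounded_summands_of_leq_sum n (F : nat -> nat) S :
  (S <= \sum_(i < n) F i)%N ->
  exists2 C : nat -> nat, (forall i, C i <= F i)%N & (\sum_(i < n) C i)%N = S.
Proof.
elim: n S => [|n IHn] S.
  by rewrite big_ord0 leqn0 => /eqP ->; exists (fun=> 0%N); rewrite ?big_ord0.
rewrite big_ord_recr /= => le_S_sum.
have [C le_C_F sumC] : exists2 C : nat -> nat,
    (forall i, C i <= F i)%N & (\sum_(i < n) C i)%N = (S - minn S (F n))%N.
  by apply: IHn; move: le_S_sum; set s := (\sum_(i < n) _)%N; lia.
exists (fun i => if i == n then minn S (F n) else C i).
  by move=> i; case: eqP => [->|_]; rewrite ?geq_minr.
rewrite big_ord_recr /= eqxx.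
under eq_bigr => i _ do rewrite (ltn_eqF (ltn_ord i)).
by rewrite sumC subnK // geq_minl.
Qed.

Lemma leq_sum_first3 n (F : nat -> nat) :
  (3 <= n)%N -> (F 0 + F 1 + F 2 <= \sum_(i < n) F i)%N.
Proof.
move=> n_ge3; rewrite -(big_mkord xpredT F) (big_ltn (leq_trans _ n_ge3)) //.
by rewrite (big_ltn (leq_trans _ n_ge3)) // (big_ltn n_ge3) !addnA leq_addr.
Qed.

Section DivisibleHomogeneous.
Variables (k : fieldType) (n : nat).

Definition dvd_homog (q s : nat) (f : {mpoly k[n]}) :=
  forall u, u \in msupp f -> (forall j, q %| u j)%N /\ mdeg u = s.

Lemma dvd_homog1 q : dvd_homog q 0 1.
Proof.
move=> u; rewrite msupp1 inE => /eqP ->.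
by split=> [j|]; rewrite ?mnm0E ?dvdn0 ?mdeg0.
Qed.

Lemma dvd_homogM q s s' f g :
  dvd_homog q s f -> dvd_homog q s' g -> dvd_homog q (s + s') (f * g).
Proof.
move=> hf hg u /msuppM_le /allpairsP [[u1 u2] /= [u1f u2g ->]].
have [dvd1 deg1] := hf _ u1f; have [dvd2 deg2] := hg _ u2g.
by split=> [j|]; rewrite ?mnmDE ?dvdn_add ?mdegD ?deg1 ?deg2.
Qed.

Lemma dvd_homogX q s f t : dvd_homog q s f -> dvd_homog q (s * t) (f ^+ t).
Proof.
move=> hf; elim: t => [|t IHt]; first by rewrite muln0 expr0; apply: dvd_homog1.
by rewrite exprS mulnS; apply: dvd_homogM.
Qed.

Lemma dvd_homog_frobenius p q s f : p \in [pchar k] ->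
  dvd_homog q s f -> dvd_homog (q * p) (s * p) (f ^+ p).
Proof.
move=> pchar_p hf.
have pchar_mpoly : p \in [pchar {mpoly k[n]}] := rmorph_pchar (@mpolyC n k) pchar_p.
have -> : f ^+ p = \sum_(m <- msupp f) (f@_m ^+ p *: 'X_[m *+ p]).
  rewrite -(pFrobenius_autE pchar_mpoly) {1}[f]mpolyE rmorph_sum /=.
  by apply: eq_bigr => m _; rewrite pFrobenius_autE exprZn mpolyXn.
move=> u /msupp_sum_le /flattenP [_ /mapP [m m_f ->]] /msuppZ_le.
rewrite msuppX inE => /eqP ->.
rewrite filter_predT in m_f; have [dvd_m deg_m] := hf _ m_f.
by split=> [j|]; rewrite ?mulmnE ?dvdn_mul ?mdegMn ?deg_m.
Qed.

Lemma dvd_homog_frobenius_iter p e f : p \in [pchar k] ->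
  dvd_homog 1 1 f -> dvd_homog (p ^ e) (p ^ e) (f ^+ (p ^ e)).
Proof.
move=> pchar_p hf; elim: e => [|e IHe]; first by rewrite expn0 expr1.
by rewrite expnSr exprM; apply: dvd_homog_frobenius.
Qed.

End DivisibleHomogeneous.

Section BoxArgument.
Variables (k : fieldType) (n : nat) (d : nat -> nat).

Lemma trunc_eq0 (g : {mpoly k[n]}) :
  (forall u, u \in msupp g -> ~~ in_box d u) -> trunc d g = 0.
Proof.
move=> out_g; rewrite /trunc big_seq_cond big1 // => u /andP [u_g u_in].
by rewrite (negbTE (out_g _ u_g)) in u_in.
Qed.

Lemma mcoeff_trunc_eq0 (g : {mpoly k[n]}) c : g@_c = 0 -> (trunc d g)@_c = 0.
Proof.
move=> gc0; rewrite /trunc raddf_sum big1 // => u _.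
by rewrite /= mcoeffZ mcoeffX; case: eqP => [->|_]; rewrite ?gc0 ?mul0r ?mulr0.
Qed.

Lemma mulA_powX_eq0 (l : {mpoly k[n]}) m (am : 'X_{1..n}) :
  (forall u, u \in msupp (l ^+ m) -> ~~ in_box d (u + am)) ->
  mulA_pow d l m 'X_[am] = 0.
Proof.
move=> out_lm; apply: trunc_eq0 => u.
rewrite (perm_mem (msuppMX _ _)) => /mapP [u' u'_lm ->].
by rewrite addmC; apply: out_lm.
Qed.

Lemma mcoeff_mulA_pow_eq0 (l a : {mpoly k[n]}) m (cm : 'X_{1..n}) :
  (forall u, u \in msupp (l ^+ m) -> exists j, cm j < u j)%N ->
  (mulA_pow d l m a)@_cm = 0.
Proof.
move=> above_cm; apply: mcoeff_trunc_eq0; apply/eqP; rewrite mcoeff_eq0.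
apply/negP => /msuppM_le /allpairsP [[u1 u2] /= [u1_lm _ cmE]].
have [j] := above_cm _ u1_lm.
by rewrite cmE mnmDE ltnNge leq_addr.
Qed.

Lemma not_max_rank_mul (l : {mpoly k[n]}) m (am cm : 'X_{1..n}) :
  in_box d am -> in_box d cm -> mdeg cm = (mdeg am + m)%N ->
  (forall u, u \in msupp (l ^+ m) -> ~~ in_box d (u + am)) ->
  (forall u, u \in msupp (l ^+ m) -> exists j, cm j < u j)%N ->
  ~ max_rank_mul d l (mdeg am) m.
Proof.
move=> am_in cm_in deg_cm out_lm above_cm [inj | surj].
  have Xam_in : inA d (mdeg am) ('X_[am] : {mpoly k[n]}).
    by move=> u; rewrite msuppX inE => /eqP ->.
  have zero_in : inA d (mdeg am) (0 : {mpoly k[n]}) by move=> u; rewrite msupp0.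
  have /(congr1 (mcoeff am)) : 'X_[am] = 0 :> {mpoly k[n]}.
    apply: inj Xam_in zero_in _.
    by rewrite mulA_powX_eq0 // /mulA_pow mulr0 /trunc msupp0 big_nil.
  by rewrite mcoeffX eqxx mcoeff0 => /eqP; rewrite oner_eq0.
have Xcm_in : inA d (mdeg am + m) ('X_[cm] : {mpoly k[n]}).
  by move=> u; rewrite msuppX inE => /eqP ->.
have [a _ /(congr1 (mcoeff cm))] := surj _ Xcm_in.
by rewrite mcoeff_mulA_pow_eq0 // mcoeffX eqxx => /eqP; rewrite eq_sym oner_eq0.
Qed.

Lemma mdeg_leq_blocks q (g : nat -> nat) (u : 'X_{1..n}) : (0 < q)%N ->
  (forall j, q %| u j)%N -> (forall j : 'I_n, u j < g j * q)%N ->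
  (mdeg u <= q * \sum_(j < n) (g j - 1))%N.
Proof.
move=> q_gt0 dvd_u lt_u; rewrite mdegE big_distrr /=; apply: leq_sum => j _.
rewrite -(divnK (dvd_u j)) mulnC leq_pmul2l //.
by move: (lt_u j); rewrite -ltn_divLR //; case: (g j) => // g'; rewrite subn1.
Qed.

Lemma exists_large_exponent q (g : nat -> nat) (f : {mpoly k[n]}) u :
  (0 < q)%N -> dvd_homog q (q * (\sum_(j < n) (g j - 1)).+1) f ->
  u \in msupp f -> exists j : 'I_n, (g j * q <= u j)%N.
Proof.
move=> q_gt0 hf /hf [dvd_u deg_u].
case: (boolP [exists j : 'I_n, g j * q <= u j]%N) => [/existsP //|].
rewrite negb_exists => /forallP lt_u.
have /(mdeg_leq_blocks q_gt0 dvd_u) : forall j : 'I_n, (u j < g j * q)%N.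
  by move=> j; rewrite ltnNge lt_u.
by rewrite deg_u leq_pmul2l // ltnn.
Qed.

Lemma not_SLP_of_box q (a g : nat -> nat) : (0 < q)%N ->
  (forall l : {mpoly k[n]}, inA d 1 l -> dvd_homog q q (l ^+ q)) ->
  (forall i, i < n -> a i < d i <= a i + g i * q)%N ->
  (\sum_(i < n) a i + q * (\sum_(i < n) (g i - 1)).+1
     <= \sum_(i < n) minn (d i - 1) (g i * q - 1))%N ->
  ~ SLP k n d.
Proof.
move=> q_gt0 frob box room [l l_lin slp].
set t := (\sum_(i < n) (g i - 1)).+1.
have lm_homog : dvd_homog q (q * t) (l ^+ (q * t)).
  by rewrite exprM; apply/dvd_homogX/frob.
have [c le_c sum_c] :=
  @bounded_summands_of_leq_sum n (fun i => minn (d i - 1) (g i * q - 1)) _ room.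
pose am : 'X_{1..n} := [multinom a i | i < n].
pose cm : 'X_{1..n} := [multinom c i | i < n].
have mdeg_multinom (h : nat -> nat) : mdeg [multinom h i | i < n] = (\sum_(i < n) h i)%N.
  by rewrite mdegE; apply: eq_bigr => i _; rewrite mnmE.
have box_j (j : 'I_n) := box j (ltn_ord j).
apply: (@not_max_rank_mul l (q * t) am cm) (slp _ _ _).
- by apply/forallP => j; rewrite mnmE; case/andP: (box_j j).
- apply/forallP => j; rewrite mnmE; have := le_c j; have := box_j j; lia.
- by rewrite !mdeg_multinom sum_c.
- move=> u /(exists_large_exponent q_gt0 lm_homog) [j le_u]; apply/forallP => /(_ j).
  rewrite mnmDE mnmE; move: le_u (box_j j); set x := (g j * q)%N; lia.
- move=> u /(exists_large_exponent q_gt0 lm_homog) [j le_u]; exists j; rewrite mnmE.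
  move: le_u (le_c j) (box_j j); set x := (g j * q)%N; lia.
- by rewrite muln_gt0 q_gt0.
Qed.

End BoxArgument.

Section Slack.
Local Open Scope nat_scope.

(* Data for a coordinate with top exponent e = d_i - 1: a shift a and a
   number g of blocks of length q with a <= e < a + g q.  The exponent of x^c
   in this coordinate may reach min(e, g q - 1), which exceeds a + q (g - 1)
   by [box_slack].  Either the blocks start at 0 (slack e %% q) or they end
   exactly at e (slack q - 2 - e %% q); [box_cut] picks the larger. *)
Definition box_cut (q e : nat) : bool := (q <= e) && (e %% q < q - 2 - e %% q).

Definition box_shift (q e : nat) : nat := if box_cut q e then e %% q + 1 else 0.

Definition box_blocks (q e : nat) : nat :=
  if box_cut q e then e %/ q else (e %/ q).+1.

Definition box_slack (q e : nat) : nat :=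
  if box_cut q e then q - 2 - e %% q else e %% q.

Lemma box_shift_blocks q e : 0 < q ->
  box_shift q e <= e < box_shift q e + box_blocks q e * q /\
  box_shift q e + q * (box_blocks q e - 1) + box_slack q e
    <= minn e (box_blocks q e * q - 1).
Proof.
move=> q_gt0; rewrite /box_shift /box_blocks /box_slack /box_cut.
have e_def := divn_eq e q; have lt_mod : e %% q < q by rewrite ltn_mod.
move: e_def lt_mod; set N := e %/ q; set r := e %% q => e_def lt_mod.
case: ifP => [/andP [le_q_e lt_r] | _]; last by rewrite mulSn; lia.
have N_gt0 : 0 < N by case: N e_def => // e_def; lia.
rewrite mulnBr muln1 [q * N]mulnC.
have : q <= N * q by rewrite leq_pmull.
lia.
Qed.

Lemma box_slack_ge_mod q e : e %% q <= box_slack q e.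
Proof. by rewrite /box_slack /box_cut; case: ifP => // /andP [_ /ltnW]. Qed.

Lemma box_slack_ge_cut q e : q <= e -> q - 2 - e %% q <= box_slack q e.
Proof.
by move=> le_q_e; rewrite /box_slack /box_cut le_q_e /=; case: ltnP.
Qed.

Lemma box_slack_small q e : e < q -> box_slack q e = e.
Proof. by move=> lt_e_q; rewrite /box_slack /box_cut leqNgt lt_e_q modn_small. Qed.

Lemma box_slack_ge_half q e : q <= e -> (q - 1)./2 <= box_slack q e.
Proof.
have [-> //|q_gt0] := posnP q.
move=> le_q_e; have := box_slack_ge_mod q e; have := box_slack_ge_cut le_q_e.
have : e %% q < q by rewrite ltn_mod.
move: (e %% q) (box_slack q e) => r s; rewrite -!divn2; lia.
Qed.

End Slack.

Lemma not_SLP_of_slack (k : fieldType) n (d : nat -> nat) p e :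
  p \in [pchar k] -> (forall i, i < n -> 0 < d i)%N ->
  (p ^ e <= \sum_(i < n) box_slack (p ^ e) (d i - 1))%N -> ~ SLP k n d.
Proof.
move=> pchar_p d_gt0 room.
have q_gt0 : (0 < p ^ e)%N by rewrite expn_gt0 prime_gt0 ?(pcharf_prime pchar_p).
apply: (@not_SLP_of_box k n d (p ^ e) (fun i => box_shift (p ^ e) (d i - 1))
          (fun i => box_blocks (p ^ e) (d i - 1)) q_gt0).
- move=> l l_lin; apply: dvd_homog_frobenius_iter => // u /l_lin [_ ->].
  by split=> // j; apply: dvd1n.
- move=> i /d_gt0 d_gt0i; have [/andP [] + + _] := box_shift_blocks (d i - 1) q_gt0.
  set a := box_shift _ _; set x := (box_blocks _ _ * _)%N; lia.
- have fit (i : 'I_n) := (box_shift_blocks (d i - 1) q_gt0).2.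
  apply: leq_trans (leq_sum _ (fun i _ => fit i)).
  rewrite !big_split /= -big_distrr /= mulnS; move: room.
  set A := (\sum_(i < n) _)%N; set B := (\sum_(i < n) _)%N; set S := (\sum_(i < n) _)%N.
  lia.
Qed.

Lemma sum_box_slack_small q (d : nat -> nat) a b :
  (forall i, a <= i -> i < b -> d i - 1 < q)%N ->
  (\sum_(a <= i < b) box_slack q (d i - 1))%N = sum_dm1 d a b.
Proof.
move=> small; apply: eq_big_nat => i /andP [le_a_i lt_i_b].
exact/box_slack_small/small.
Qed.

Section Cases.
Local Open Scope nat_scope.
Variables (k : fieldType) (p n : nat) (d : nat -> nat).
Hypothesis pchar_p : p \in [pchar k].
Hypothesis d_ge2 : forall i, i < n -> 2 <= d i.
Hypothesis d_noninc : forall i j, i <= j -> j < n -> d j <= d i.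

Let d_gt0 i : i < n -> 0 < d i.
Proof. by move/d_ge2; apply: leq_trans. Qed.

Lemma not_SLP_char2 : 3 <= n -> p = 2 -> ~ SLP k n d.
Proof.
move=> n_ge3 p2; subst p.
have slack2 i : i < n -> ~~ odd (d i) <= box_slack 2 (d i - 1).
  move=> /d_ge2 d_ge2i; have := box_slack_ge_mod 2 (d i - 1).
  have := odd_double_half (d i); rewrite -muln2.
  by case: (odd (d i)) => /= ?; lia.
have slack4 i : i < n -> 2 * odd (d i) <= box_slack 4 (d i - 1).
  move=> /d_ge2 d_ge2i; have := box_slack_ge_mod 4 (d i - 1).
  have := odd_double_half (d i); rewrite -muln2.
  case: (odd (d i)) => /= ? ?; last by lia.
  by case: (leqP 4 (d i - 1)) => [/box_slack_ge_cut|] /=; lia.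
have [n_gt0 n_gt1 n_gt2] : [/\ 0 < n, 1 < n & 2 < n] by split; lia.
case: (leqP 2 (odd (d 0) + odd (d 1) + odd (d 2))) => odd_count.
  apply: (@not_SLP_of_slack k n d 2 2) => //.
  rewrite (_ : 2 ^ 2 = 4) //.
  apply: leq_trans (leq_sum_first3 (fun i => box_slack 4 (d i - 1)) n_ge3).
  move: odd_count (slack4 0 n_gt0) (slack4 1 n_gt1) (slack4 2 n_gt2).
  by case: (odd (d 0)); case: (odd (d 1)); case: (odd (d 2)); lia.
apply: (@not_SLP_of_slack k n d 2 1) => //.
rewrite expn1.
apply: leq_trans (leq_sum_first3 (fun i => box_slack 2 (d i - 1)) n_ge3).
move: odd_count (slack2 0 n_gt0) (slack2 1 n_gt1) (slack2 2 n_gt2).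
by case: (odd (d 0)); case: (odd (d 1)); case: (odd (d 2)); lia.
Qed.

Lemma not_SLP_small_degrees : d 0 <= p -> p <= sum_dm1 d 0 n -> ~ SLP k n d.
Proof.
move=> le_d0_p room; apply: (@not_SLP_of_slack k n d p 1) => //.
rewrite expn1 -(big_mkord xpredT (fun i => box_slack p (d i - 1))).
rewrite sum_box_slack_small // => i _ lt_i_n.
by have := d_noninc (leq0n i) lt_i_n; have := d_gt0 lt_i_n; lia.
Qed.

Lemma not_SLP_one_large_degree N1 r1 : 0 < n ->
  d 0 = N1 * p + r1 -> 0 < r1 <= p -> p < d 0 -> d 1 <= p ->
  r1 < sum_dm1 d 1 n \/ p < r1 + sum_dm1 d 1 n -> ~ SLP k n d.
Proof.
move=> n_gt0 d0_def /andP [r1_gt0 le_r1_p] lt_p_d0 le_d1_p room.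
apply: (@not_SLP_of_slack k n d p 1) => //; rewrite expn1.
have mod_d0 : (d 0 - 1) %% p = r1 - 1.
  by rewrite d0_def -addnBA // modnMDl modn_small //; lia.
have ge_mod := box_slack_ge_mod p (d 0 - 1).
have ge_cut : p - 2 - (d 0 - 1) %% p <= box_slack p (d 0 - 1).
  by apply: box_slack_ge_cut; lia.
rewrite -(big_mkord xpredT (fun i => box_slack p (d i - 1))) big_ltn; last by lia.
rewrite sum_box_slack_small => [|i le_1_i lt_i_n]; first by lia.
by have := d_noninc le_1_i lt_i_n; have := d_gt0 lt_i_n; lia.
Qed.

Lemma not_SLP_two_large_degrees : 3 <= n -> 3 <= p -> p < d 1 -> ~ SLP k n d.
Proof.
move=> n_ge3 p_ge3 lt_p_d1.
have p_odd : odd p by case: (even_prime (pcharf_prime pchar_p)) => // p2; lia.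
have [n_gt1 n_gt2] : 1 < n /\ 2 < n by split; lia.
have half0 : (p - 1)./2 <= box_slack p (d 0 - 1).
  by apply: box_slack_ge_half; have := d_noninc (leq0n 1) n_gt1; lia.
have half1 : (p - 1)./2 <= box_slack p (d 1 - 1).
  by apply: box_slack_ge_half; lia.
have pos2 : 0 < box_slack p (d 2 - 1).
  have := d_ge2 n_gt2; case: (ltnP (d 2 - 1) p) => [/box_slack_small -> | ]; first by lia.
  by move/box_slack_ge_half; rewrite -divn2; lia.
apply: (@not_SLP_of_slack k n d p 1) => //; rewrite expn1.
apply: leq_trans (leq_sum_first3 (fun i => box_slack p (d i - 1)) n_ge3).
move: half0 half1 pos2; have := odd_double_half p; rewrite p_odd -!divn2 -muln2.
lia.
Qed.

End Cases.

Unset Implicit Arguments.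

Theorem proposition3p5 (k : fieldType) (p : nat) (n : nat) (d : nat -> nat)
    (r1 : nat) :
  p \in [pchar k] ->
  (3 <= n)%N ->
  (forall i j : nat, (i <= j)%N -> (j < n)%N -> (d j <= d i)%N) ->
  (forall i : nat, (i < n)%N -> (2 <= d i)%N) ->
  (exists N1 : nat, d 0%N = (N1 * p + r1)%N) -> (0 < r1)%N -> (r1 <= p)%N ->
  (p = 2%N
   \/ ((3 <= p)%N /\ (p < d 0%N)%N /\ (d 1%N <= p)%N /\ (r1 < sum_dm1 d 1 n)%N)
   \/ ((3 <= p)%N /\ (p < d 0%N)%N /\ (d 1%N <= p)%N /\ (p < r1 + sum_dm1 d 1 n)%N)
   \/ ((3 <= p)%N /\ (d 0%N <= p)%N /\ (p <= sum_dm1 d 0 n)%N)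
   \/ ((3 <= p)%N /\ (p < d 1%N)%N)) ->
  ~ SLP k n d.
Proof.
move=> pchar_p n_ge3 d_noninc d_ge2 [N1 d0_def] r1_gt0 le_r1_p.
have r1_range : (0 < r1 <= p)%N by rewrite r1_gt0.
case=> [p2 | [[_ [lt_p_d0 [le_d1_p room]]] | [[_ [lt_p_d0 [le_d1_p room]]] |
         [[_ [le_d0_p room]] | [p_ge3 lt_p_d1]]]]].
- exact: not_SLP_char2 pchar_p d_ge2 n_ge3 p2.
- by apply: (not_SLP_one_large_degree pchar_p d_ge2 d_noninc (ltnW (ltnW n_ge3))
    d0_def r1_range lt_p_d0 le_d1_p); left.
- by apply: (not_SLP_one_large_degree pchar_p d_ge2 d_noninc (ltnW (ltnW n_ge3))
    d0_def r1_range lt_p_d0 le_d1_p); right.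
- exact: not_SLP_small_degrees pchar_p d_ge2 d_noninc le_d0_p room.
- exact: not_SLP_two_large_degrees pchar_p d_ge2 d_noninc n_ge3 p_ge3 lt_p_d1.
Qed.
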